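(* Let $m$ and $k$ be positive integers with $m > k$, and let $A \in \mathcal A_k$. Then the collection of numerical semigroups with multiplicity $m$ and type $(A; k)$ is exactly the collection of sets of the form (a disjoint union) \[ \Lambda = \{0\} \cup (m + A) \cup \bigl(2m + ((A + A)\cap[0, k])\bigr) \cup B \cup [2m + k + 1, \infty) \] where $B$ is any subset of $[m+k+1, 2m+k-1] \setminus (2m + A + A)$.
   Context: A numerical semigroup is a subset $\Lambda\subseteq\mathbb{N}_0$ closed under addition, containing $0$, with finite complement in $\mathbb{N}_0$. Its multiplicity $m$ is its smallest nonzero element and its Frobenius number $f$ is the largest element of $\mathbb{N}_0\setminus\Lambda$. For integers $a\le b$, $[a,b]=\{a,\dots,b\}$, and $[a,\infty)=\{a,a+1,\dots\}$. For $A\subseteq\mathbb{Z}$ and $b\in\mathbb{Z}$, $A+A=\{a_1+a_2:a_1,a_2\in A\}$ and $b+A=\{a+b:a\in A\}$. For a positive integer $k$, $\mathcal A_k = \{A \subseteq [0, k-1] : 0 \in A \text{ and } k \notin A + A\}$. A numerical semigroup $\Lambda$ with multiplicity $m$ and Frobenius number $f$ satisfying $2m<f<3m$ has type $(A;k)$, where $k<m$ is a positive integer and $A\in\mathcal A_k$, if $f=2m+k$ and $\Lambda\cap[m,m+k]=A+m$. *)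

From Stdlib Require Import Arith Lia.

Definition numerical_semigroup (L : nat -> Prop) : Prop :=
  L 0 /\ (forall x y, L x -> L y -> L (x + y)) /\
  (exists N, forall n, N <= n -> L n).

Definition is_multiplicity (L : nat -> Prop) (m : nat) : Prop :=
  0 < m /\ L m /\ (forall x, 0 < x -> x < m -> ~ L x).

Definition is_frobenius (L : nat -> Prop) (f : nat) : Prop :=
  ~ L f /\ (forall x, f < x -> L x).

Definition in_Ak (k : nat) (A : nat -> Prop) : Prop :=
  A 0 /\ (forall a, A a -> a <= k - 1) /\
  ~ (exists a1 a2, A a1 /\ A a2 /\ a1 + a2 = k).

Definition has_type (L : nat -> Prop) (m k : nat) (A : nat -> Prop) : Prop :=
  exists f, is_frobenius L f /\ 2 * m < f /\ f < 3 * m /\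
  0 < k /\ k < m /\ in_Ak k A /\ f = 2 * m + k /\
  (forall x, m <= x <= m + k -> (L x <-> exists a, A a /\ x = m + a)).

(* Every nonzero element of a semigroup of multiplicity m is at least m, so a sum
   of two nonzero elements that is at most 2m + k has both summands in [m, m + k],
   i.e. in m + A.  Hence below the Frobenius number 2m + k the only forced sums are
   2m + ((A + A) ∩ [0, k]), and the remaining elements of [m + k + 1, 2m + k - 1]
   can be chosen freely: any sum involving them exceeds 2m + k. *)
From Stdlib Require Import Arith Lia Classical.

Definition type_set (m k : nat) (A B : nat -> Prop) (x : nat) : Prop :=
  x = 0 \/
  (exists a, A a /\ x = m + a) \/
  (exists a1 a2, A a1 /\ A a2 /\ a1 + a2 <= k /\ x = 2 * m + (a1 + a2)) \/
  B x \/
  2 * m + k + 1 <= x.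

Definition admissible_extra (m k : nat) (A B : nat -> Prop) : Prop :=
  forall x, B x ->
    m + k + 1 <= x /\ x <= 2 * m + k - 1 /\
    ~ (exists a1 a2, A a1 /\ A a2 /\ x = 2 * m + (a1 + a2)).

Section SemigroupOfType.

Variables (m k : nat) (A L : nat -> Prop).
Hypothesis A_in_Ak : in_Ak k A.
Hypotheses (L_semigroup : numerical_semigroup L) (L_mult : is_multiplicity L m)
  (L_type : has_type L m k A).

Lemma semigroup_zero_or_ge_mult x : L x -> x = 0 \/ m <= x.
Proof.
  intros Lx. destruct L_mult as [_ [_ L_small]].
  destruct (Nat.eq_dec x 0); [now left | right].
  destruct (le_lt_dec m x) as [|x_lt_m]; [easy|].
  exfalso. apply (L_small x); auto; lia.
Qed.

Lemma semigroup_window x : m <= x <= m + k -> (L x <-> exists a, A a /\ x = m + a).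
Proof.
  destruct L_type as [f [_ [_ [_ [_ [_ [_ [_ window]]]]]]]]. exact (window x).
Qed.

Lemma semigroup_frobenius : is_frobenius L (2 * m + k).
Proof.
  destruct L_type as [f [frob [_ [_ [_ [_ [_ [-> _]]]]]]]]. exact frob.
Qed.

Lemma semigroup_double_sumset a1 a2 : A a1 -> A a2 -> L (2 * m + (a1 + a2)).
Proof.
  intros A1 A2. destruct A_in_Ak as [_ [A_le _]].
  pose proof (A_le a1 A1). pose proof (A_le a2 A2).
  replace (2 * m + (a1 + a2)) with ((m + a1) + (m + a2)) by lia.
  destruct L_semigroup as [_ [L_add _]].
  apply L_add; apply semigroup_window; eauto; lia.
Qed.

Definition extra_part (x : nat) : Prop :=
  L x /\ m + k + 1 <= x /\ x <= 2 * m + k - 1 /\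
  ~ (exists a1 a2, A a1 /\ A a2 /\ x = 2 * m + (a1 + a2)).

Lemma extra_part_admissible : admissible_extra m k A extra_part.
Proof. now intros x [_ bounds]. Qed.

Lemma semigroup_eq_type_set x : L x <-> type_set m k A extra_part x.
Proof.
  destruct semigroup_frobenius as [not_frob above_frob].
  split.
  - intros Lx. destruct (semigroup_zero_or_ge_mult x Lx) as [->|x_ge_m]; [now left|].
    right. destruct (le_dec x (m + k)).
    { left. now apply semigroup_window. }
    destruct (le_dec x (2 * m + k - 1)).
    + destruct (classic (exists a1 a2, A a1 /\ A a2 /\ x = 2 * m + (a1 + a2)))
        as [[a1 [a2 [A1 [A2 ->]]]] | not_sum].
      * right; left. exists a1, a2. repeat split; auto; lia.
      * right; right; left. repeat split; auto; lia.
    + assert (x <> 2 * m + k) by (intros ->; contradiction).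
      right; right; right. lia.
  - intros [->|[[a [Aa ->]]|[[a1 [a2 [A1 [A2 [_ ->]]]]]|[[Lx _]|x_big]]]].
    + now destruct L_semigroup.
    + destruct A_in_Ak as [_ [A_le _]]. pose proof (A_le a Aa).
      apply semigroup_window; eauto; lia.
    + now apply semigroup_double_sumset.
    + exact Lx.
    + apply above_frob. lia.
Qed.

End SemigroupOfType.

Section TypeSetIsSemigroup.

Variables (m k : nat) (A B L : nat -> Prop).
Hypotheses (k_gt0 : 0 < k) (k_lt_m : k < m) (A_in_Ak : in_Ak k A).
Hypotheses (B_admissible : admissible_extra m k A B)
  (L_def : forall x, L x <-> type_set m k A B x).

Lemma type_set_zero_or_ge_mult x : L x -> x = 0 \/ m <= x.
Proof.
  intros Lx. apply L_def in Lx.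
  destruct Lx as [->|[[a [_ ->]]|[[a1 [a2 [_ [_ [_ ->]]]]]|[Bx|x_big]]]];
    try (apply B_admissible in Bx); lia.
Qed.

Lemma type_set_window x : L x -> m <= x <= m + k -> exists a, A a /\ x = m + a.
Proof.
  intros Lx x_range. apply L_def in Lx.
  destruct Lx as [->|[Ax|[[a1 [a2 [_ [_ [_ ->]]]]]|[Bx|x_big]]]];
    try (apply B_admissible in Bx); try easy; lia.
Qed.

Lemma type_set_add x y : L x -> L y -> L (x + y).
Proof.
  intros Lx Ly.
  destruct (type_set_zero_or_ge_mult x Lx) as [->|x_ge_m]; [easy|].
  destruct (type_set_zero_or_ge_mult y Ly) as [->|y_ge_m]; [now rewrite Nat.add_0_r|].
  apply L_def. destruct (le_dec (x + y) (2 * m + k)).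
  - destruct (type_set_window x Lx) as [a1 [A1 ->]]; [lia|].
    destruct (type_set_window y Ly) as [a2 [A2 ->]]; [lia|].
    right; right; left. exists a1, a2. repeat split; auto; lia.
  - right; right; right; right. lia.
Qed.

Lemma type_set_not_frobenius : ~ L (2 * m + k).
Proof.
  destruct A_in_Ak as [_ [A_le no_k]].
  intros Lf. apply L_def in Lf.
  destruct Lf as [Lf|[[a [Aa eq_a]]|[[a1 [a2 [A1 [A2 [_ eq_sum]]]]]|[Bx|x_big]]]].
  - lia.
  - pose proof (A_le a Aa). lia.
  - apply no_k. exists a1, a2. repeat split; auto; lia.
  - apply B_admissible in Bx. lia.
  - lia.
Qed.

Lemma type_set_ge_frobenius x : 2 * m + k < x -> L x.
Proof. intros x_big. apply L_def. right; right; right; right. lia. Qed.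

Lemma type_set_numerical_semigroup : numerical_semigroup L.
Proof.
  split; [now apply L_def; left | split].
  - exact type_set_add.
  - exists (2 * m + k + 1). intros n n_big. apply type_set_ge_frobenius. lia.
Qed.

Lemma type_set_multiplicity : is_multiplicity L m.
Proof.
  destruct A_in_Ak as [A0 _].
  split; [lia | split].
  - apply L_def. right; left. exists 0. split; auto; lia.
  - intros x x_pos x_lt_m Lx. destruct (type_set_zero_or_ge_mult x Lx); lia.
Qed.

Lemma type_set_has_type : has_type L m k A.
Proof.
  exists (2 * m + k).
  split; [split; [exact type_set_not_frobenius | exact type_set_ge_frobenius] |].
  do 6 (split; [easy || lia |]).
  intros x x_range. split.
  - intros Lx. now apply type_set_window.
  - intros Ax. apply L_def. right; left. exact Ax.
Qed.

End TypeSetIsSemigroup.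

Theorem proposition3p3 (m k : nat) (A : nat -> Prop) :
  0 < k -> k < m -> in_Ak k A ->
  forall L : nat -> Prop,
    (numerical_semigroup L /\ is_multiplicity L m /\ has_type L m k A) <->
    (exists B : nat -> Prop,
        (forall x, B x ->
           m + k + 1 <= x /\ x <= 2 * m + k - 1 /\
           ~ (exists a1 a2, A a1 /\ A a2 /\ x = 2 * m + (a1 + a2))) /\
        (forall x, L x <->
           (x = 0 \/
            (exists a, A a /\ x = m + a) \/
            (exists a1 a2, A a1 /\ A a2 /\ a1 + a2 <= k /\ x = 2 * m + (a1 + a2)) \/
            B x \/
            2 * m + k + 1 <= x))).
Proof.
  intros k_gt0 k_lt_m A_in_Ak L. split.
  - intros [L_semigroup [L_mult L_type]].
    exists (extra_part m k A L). split.
    + apply extra_part_admissible.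
    + now apply semigroup_eq_type_set.
  - intros [B [B_admissible L_def]].
    split; [| split].
    + eapply type_set_numerical_semigroup; eauto.
    + eapply type_set_multiplicity; eauto.
    + eapply type_set_has_type; eauto.
Qed.
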